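(* Suppose that for each $J\subseteq[n]$, $\mathcal B_n(J)$ is a set of homogeneous polynomials in $\mathbb C[\mathbf x_n]$ whose images form a basis of $\mathbb C[\mathbf x_n]/(I^B_n:f_J)$. Then the images in $SR^B_n$ of the elements of $\mathcal B_n=\bigsqcup_{J\subseteq[n]}\mathcal B_n(J)\cdot\theta_J$ are linearly independent.
   Context: $\mathbb C[\mathbf x_n]=\mathbb C[x_1,\dots,x_n]$; $\Omega_n=\mathbb C[\mathbf x_n]\otimes\wedge\{\theta_1,\dots,\theta_n\}$ with anticommuting $\theta_i$ commuting with the $x_j$; $\theta_J=\theta_{j_1}\cdots\theta_{j_k}$ for $J=\{j_1<\dots<j_k\}$. $\mathfrak B_n$ (signed permutations) acts by $\pi(x_i)=x_{\pi(i)}$, $\pi(\theta_i)=\theta_{\pi(i)}$, $x_{-i}=-x_i$, $\theta_{-i}=-\theta_i$. $SI^B_n$ is the ideal of $\Omega_n$ generated by the invariants with zero constant term, $SR^B_n=\Omega_n/SI^B_n$; $I^B_n$ is the ideal of $\mathbb C[\mathbf x_n]$ generated by invariant polynomials with zero constant term. $(I:f)=\{g:fg\in I\}$. $f_J=\prod_{j\in J}x_j\prod_{j<i\le n}(x_j^2-x_i^2)$. *)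

(* multinomials' mpoly for C[x_1..x_n]; C is modelled as R[i]
   (complex numbers over a realType R, i.e. the complex field). *)
From HB Require Import structures.
From mathcomp Require Import all_boot all_order all_algebra all_fingroup.
From mathcomp Require Import reals complex.
From mathcomp Require Import mpoly.
Set Implicit Arguments. Unset Strict Implicit. Unset Printing Implicit Defensive.
Import GRing.Theory.
Local Open Scope ring_scope.

(* Signed permutations of [n] (0-based: 'I_n stands for {1,...,n}):
   a pair (sigma, eps) acting by  i |-> (-1)^(eps i) * sigma(i). *)
Definition signed_perm (n : nat) := ('S_n * {ffun 'I_n -> bool})%type.

Definition sgn_of (K : fieldType) (b : bool) : K := (-1) ^+ b.

(* image of the variables x_i under pi : pi(x_i) = x_{pi(i)}, x_{-i} = - x_i *)
Definition spx (K : fieldType) (n : nat) (pi : signed_perm n)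
  : n.-tuple {mpoly K[n]} :=
  [tuple (sgn_of K (pi.2 i)) *: 'X_(pi.1 i) | i < n].

Definition pact (K : fieldType) (n : nat) (pi : signed_perm n)
  (p : {mpoly K[n]}) : {mpoly K[n]} := p \mPo spx K pi.

Definition poly_invariant (K : fieldType) (n : nat) (p : {mpoly K[n]}) :=
  forall pi : signed_perm n, pact pi p = p.

Definition IB (K : fieldType) (n : nat) (p : {mpoly K[n]}) : Prop :=
  exists s : seq ({mpoly K[n]} * {mpoly K[n]}),
    (forall t, t \in s -> poly_invariant t.2 /\ t.2@_0%MM = 0) /\
    p = \sum_(t <- s) t.1 * t.2.

Definition colon (K : fieldType) (n : nat) (I : {mpoly K[n]} -> Prop)
  (f g : {mpoly K[n]}) : Prop := I (f * g).

Definition fJ (K : fieldType) (n : nat) (J : {set 'I_n}) : {mpoly K[n]} :=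
  \prod_(j in J) ('X_j * \prod_(i : 'I_n | (j < i)%N) ('X_j ^+ 2 - 'X_i ^+ 2)).

(* Superspace ring Omega_n = C[x_n] (x) wedge{theta_1..theta_n}, represented by
   the coordinates F J (the coefficient polynomial of theta_J). *)
Definition Omega (K : fieldType) (n : nat) := {ffun {set 'I_n} -> {mpoly K[n]}}.

Definition omono (K : fieldType) (n : nat) (J : {set 'I_n}) (p : {mpoly K[n]})
  : Omega K n := [ffun L => if L == J then p else 0].

(* sign of theta_I * theta_J = osgn I J * theta_(I u J)  (I, J disjoint) *)
Definition osgn (K : fieldType) (n : nat) (I J : {set 'I_n}) : K :=
  (-1) ^+ #|[set p : 'I_n * 'I_n | [&& p.1 \in I, p.2 \in J & (p.2 < p.1)%N]]|.

Definition omul (K : fieldType) (n : nat) (F G : Omega K n) : Omega K n :=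
  [ffun L => \sum_(I : {set 'I_n}) \sum_(J : {set 'I_n} |
                [disjoint I & J] && (I :|: J == L)) osgn K I J *: (F I * G J)].

Definition oone (K : fieldType) (n : nat) : Omega K n := omono set0 1.

Definition theta (K : fieldType) (n : nat) (i : 'I_n) : Omega K n :=
  omono [set i] 1.

Definition oact (K : fieldType) (n : nat) (pi : signed_perm n) (F : Omega K n)
  : Omega K n :=
  \sum_(J : {set 'I_n})
     omul (omono set0 (pact pi (F J)))
          (foldr (@omul K n) (oone K n)
             [seq sgn_of K (pi.2 j) *: theta K (pi.1 j) | j <- enum J]).

Definition omega_invariant (K : fieldType) (n : nat) (F : Omega K n) :=
  forall pi : signed_perm n, oact pi F = F.

Definition SIB (K : fieldType) (n : nat) (F : Omega K n) : Prop :=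
  exists s : seq (Omega K n * Omega K n * Omega K n),
    (forall t, t \in s -> omega_invariant t.1.2 /\ (t.1.2 set0)@_0%MM = 0) /\
    F = \sum_(t <- s) omul (omul t.1.1 t.1.2) t.2.

(* the images of the elements of the set B form a basis of C[x_n]/Q, where Q is
   a subspace (given by its membership predicate) *)
Definition quot_basis (K : fieldType) (n : nat) (Q B : {mpoly K[n]} -> Prop)
  : Prop :=
  (forall (s : seq {mpoly K[n]}) (c : {mpoly K[n]} -> K),
     uniq s -> (forall p, p \in s -> B p) ->
     Q (\sum_(p <- s) c p *: p) -> forall p, p \in s -> c p = 0) /\
  (forall q : {mpoly K[n]}, exists (s : seq {mpoly K[n]}) (c : {mpoly K[n]} -> K),
     (forall p, p \in s -> B p) /\ Q (q - \sum_(p <- s) c p *: p)).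

From HB Require Import structures.
From mathcomp Require Import all_boot all_order all_algebra all_fingroup.
From mathcomp Require Import reals complex.
From mathcomp Require Import mpoly.
From mathcomp Require Import zify.
Set Implicit Arguments. Unset Strict Implicit. Unset Printing Implicit Defensive.
Import GRing.Theory.
Local Open Scope ring_scope.

(* One-forms sum_m A_{j,m} theta_m anticommute and square to zero, so any choice
   of them as images of the theta_j extends to a ring endomorphism of Omega_n.
   The substitution Xodd : theta_i |-> sum_a x_i^(2a+1) theta_a is
   B_n-equivariant, because x_i^(2a+1) transforms like theta_i, hence it maps
   SI^B_n into the elements all of whose coefficients lie in I^B_n.  Following
   it by theta_a |-> sum_m c_{a,m} theta_m, with c_{a,m} the coefficient of t^a
   in Q_m(t) = prod_{i>m} (t - x_i^2), sends theta_i to the triangular one-form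
   sum_m x_i Q_m(x_i^2) theta_m: the theta_L-coefficient of the image of theta_I
   vanishes unless L = I or L has a larger index sum, and for L = I it is f_I.
   So the image of a relation sum_t c_t p_t theta_{J_t} in SI^B_n yields, by
   induction on the index sum, (sum_{J_t = J} c_t p_t) f_J in I^B_n for every J,
   and the basis hypothesis kills every c_t. *)

Lemma disjoint_setUl (T : finType) (A B C : {set T}) :
  [disjoint A :|: B & C] = [disjoint A & C] && [disjoint B & C].
Proof. by rewrite -!setI_eq0 setIUl setU_eq0. Qed.

Lemma disjoint_setUr (T : finType) (A B C : {set T}) :
  [disjoint A & B :|: C] = [disjoint A & B] && [disjoint A & C].
Proof. by rewrite -!setI_eq0 setIUr setU_eq0. Qed.

Lemma card_set_count (T : finType) (P : pred T) :
  #|[set x | P x]| = count P (enum T).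
Proof. by rewrite -size_filter cardsE cardE enumT. Qed.

Lemma sorted_enum_ord n : sorted (relpre (@nat_of_ord n) ltn) (enum 'I_n).
Proof. by rewrite -sorted_map val_enum_ord iota_ltn_sorted. Qed.

Lemma big_ord_set (R : Type) (idx : R) (op : R -> R -> R) n (J : {set 'I_n}) F :
  \big[op/idx]_(j in J) F j = \big[op/idx]_(j <- enum 'I_n | j \in J) F j.
Proof. by rewrite [index_enum _]unlock -enumT. Qed.

Lemma sumr_antisym (V : zmodType) k (f : 'I_k -> 'I_k -> V) :
  (forall i, f i i = 0) -> (forall i j, f j i = - f i j) ->
  \sum_i \sum_j f i j = 0.
Proof.
move=> f_diag f_anti; pose g (i j : 'I_k) := if (i < j)%N then f i j else 0.
have -> : \sum_i \sum_j f i j = \sum_i \sum_j (g i j - g j i).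
  apply: eq_bigr => i _; apply: eq_bigr => j _; rewrite /g.
  by case: ltngtP => [_|_|/val_inj ->]; rewrite ?f_diag ?subr0 ?sub0r -?f_anti ?subrr.
by under eq_bigr do rewrite sumrB; rewrite sumrB exchange_big subrr.
Qed.

Lemma sumr_neq0_exists (V : zmodType) (I : finType) (P : pred I) (f : I -> V) :
  \sum_(i | P i) f i != 0 -> exists2 i, P i & f i != 0.
Proof.
move=> nz; case: (pickP [pred i | P i && (f i != 0)]) => [i /andP[Pi fi]|f0].
  by exists i.
by move: nz; rewrite big1 ?eqxx // => i Pi; move: (f0 i); rewrite /= Pi => /negbFE/eqP.
Qed.

Lemma scale_signr (R : pzRingType) (A : lalgType R) k (x : A) :
  (-1) ^+ k *: x = (-1) ^+ k * x.
Proof.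
elim: k => [|k IHk]; first by rewrite scale1r mul1r.
by rewrite !exprS -scalerA IHk scaleN1r mulN1r mulNr.
Qed.

Section ExteriorRelations.
Variables (R : pzRingType) (n : nat) (e : 'I_n -> R).
Hypothesis e_anti : forall i j, e i * e j = - (e j * e i).
Hypothesis e_sqr : forall i, e i * e i = 0.
Local Notation ord_lt := (relpre (@nat_of_ord n) ltn).

Lemma mul_prod_sorted (l : seq 'I_n) (J : {set 'I_n}) i :
  sorted ord_lt l -> i \in l ->
  e i * \prod_(j <- l | j \in J) e j =
  if i \in J then 0
  else (-1) ^+ count (fun j => (j \in J) && (j < i)%N) l *
       \prod_(j <- l | j \in i |: J) e j.
Proof.
elim: l => [//|x l IHl] /= sl; rewrite inE => il.
have x_lt y : y \in l -> (x < y)%N.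
  by apply/allP: y; apply: order_path_min sl => ? ? ?; apply: ltn_trans.
have {}sl : sorted ord_lt l by apply: path_sorted sl.
rewrite !big_cons in_setU1; case: (eqVneq i x) il => [-> _ | _ /= il].
  have xl : x \notin l by apply/negP => /x_lt; rewrite ltnn.
  case: ifP => xJ /=; first by rewrite mulrA e_sqr mul0r.
  rewrite add0n (@eq_in_count _ _ pred0) ?count_pred0 ?mul1r => [|y /x_lt xy]; last first.
    by rewrite ltnNge ltnW ?andbF.
  congr (_ * _); rewrite -big_filter -[RHS]big_filter; congr (\big[_/_]_(j <- _) _).
  by apply: eq_in_filter => y yl; rewrite in_setU1 (negbTE (memPn xl y yl)).
have xi : (x < i)%N by apply: x_lt.
case: ifP => xJ /=; last by rewrite IHl.
rewrite mulrA e_anti mulNr -mulrA IHl //; case: (i \in J); first by rewrite mulr0 oppr0.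
by rewrite xi mulrA (commr_sign (e x)) -mulrA exprS mulN1r mulNr.
Qed.

Lemma mul_prod_set (J : {set 'I_n}) i :
  e i * \prod_(j in J) e j =
  if i \in J then 0
  else (-1) ^+ #|[set j in J | (j < i)%N]| * \prod_(j in i |: J) e j.
Proof.
rewrite !big_ord_set mul_prod_sorted ?sorted_enum_ord ?mem_enum //.
by rewrite card_set_count.
Qed.

End ExteriorRelations.

(** * The superspace ring *)

Notation "p %:O" := (omono set0 p) (at level 2, format "p %:O").

Section SuperspaceRing.
Variables (K : fieldType) (n : nat).
Local Notation MP := {mpoly K[n]}.
Local Notation Om := (Omega K n).

Fact omono_is_linear J : linear (@omono K n J).
Proof.
by move=> c p q; apply/ffunP => L; rewrite !ffunE; case: eqP; rewrite ?scaler0 ?addr0.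
Qed.

HB.instance Definition _ J :=
  GRing.isLinear.Build K MP Om *:%R (omono J) (omono_is_linear J).

Lemma omegaE (F : Om) : F = \sum_I omono I (F I).
Proof.
apply/ffunP => L; rewrite sum_ffunE (bigD1 L) //= big1 => [|I /negbTE nIL].
  by rewrite ffunE eqxx addr0.
by rewrite ffunE eq_sym nIL.
Qed.

Definition crossings (I J : {set 'I_n}) : {set 'I_n * 'I_n} :=
  [set p | [&& p.1 \in I, p.2 \in J & (p.2 < p.1)%N]].

Lemma osgnE I J : osgn K I J = (-1) ^+ #|crossings I J|.
Proof. by []. Qed.

Lemma crossings0l J : crossings set0 J = set0.
Proof. by apply/setP => p; rewrite !inE. Qed.

Lemma crossings0r I : crossings I set0 = set0.
Proof. by apply/setP => p; rewrite !inE andbF. Qed.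

Lemma card_crossingsUl (I J L : {set 'I_n}) : [disjoint I & J] ->
  #|crossings (I :|: J) L| = (#|crossings I L| + #|crossings J L|)%N.
Proof.
move=> dIJ; have -> : crossings (I :|: J) L = crossings I L :|: crossings J L.
  by apply/setP => p; rewrite !inE andb_orl.
rewrite cardsU (_ : _ :&: _ = set0) ?cards0 ?subn0 //.
apply/setP => p; rewrite !inE; apply/negbTE; apply: contraTN dIJ.
by move=> /andP[/and3P[pI _ _] /and3P[pJ _ _]]; apply/pred0Pn; exists p.1; rewrite /= pI.
Qed.

Lemma card_crossingsUr (I J L : {set 'I_n}) : [disjoint J & L] ->
  #|crossings I (J :|: L)| = (#|crossings I J| + #|crossings I L|)%N.
Proof.
move=> dJL; have -> : crossings I (J :|: L) = crossings I J :|: crossings I L.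
  by apply/setP => p; rewrite !inE -!andb_orr andb_orl.
rewrite cardsU (_ : _ :&: _ = set0) ?cards0 ?subn0 //.
apply/setP => p; rewrite !inE; apply/negbTE; apply: contraTN dJL.
by move=> /andP[/and3P[_ pJ _] /and3P[_ pL _]]; apply/pred0Pn; exists p.2; rewrite /= pJ.
Qed.

Lemma osgn_cocycle (I J L : {set 'I_n}) :
  [disjoint I & J] -> [disjoint J & L] ->
  osgn K I J * osgn K (I :|: J) L = osgn K J L * osgn K I (J :|: L).
Proof.
move=> dIJ dJL; rewrite !osgnE card_crossingsUl // card_crossingsUr // -!exprD.
by congr (_ ^+ _); lia.
Qed.

Fact omulDl : left_distributive (@omul K n) +%R.
Proof.
move=> F1 F2 G; apply/ffunP => L; rewrite !ffunE -big_split; apply: eq_bigr => I _.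
by rewrite -big_split; apply: eq_bigr => J _; rewrite ffunE mulrDl scalerDr.
Qed.

Fact omulDr : right_distributive (@omul K n) +%R.
Proof.
move=> F G1 G2; apply/ffunP => L; rewrite !ffunE -big_split; apply: eq_bigr => I _.
by rewrite -big_split; apply: eq_bigr => J _; rewrite ffunE mulrDr scalerDr.
Qed.

Fact omul0l (G : Om) : omul 0 G = 0.
Proof. by apply: (addrI (omul 0 G)); rewrite -omulDl !addr0. Qed.

Fact omul0r (F : Om) : omul F 0 = 0.
Proof. by apply: (addrI (omul F 0)); rewrite -omulDr !addr0. Qed.

Fact omul_suml I (r : seq I) (F : I -> Om) (G : Om) :
  omul (\sum_(i <- r) F i) G = \sum_(i <- r) omul (F i) G.
Proof. exact: (big_morph (fun F => omul F G) (fun F1 F2 => omulDl F1 F2 G) (omul0l G)). Qed.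

Fact omul_sumr I (r : seq I) (F : Om) (G : I -> Om) :
  omul F (\sum_(i <- r) G i) = \sum_(i <- r) omul F (G i).
Proof. exact: (big_morph (omul F) (omulDr F) (omul0r F)). Qed.

Fact omulZl c (F G : Om) : omul (c *: F) G = c *: omul F G.
Proof.
apply/ffunP => L; rewrite !ffunE scaler_sumr; apply: eq_bigr => I _.
by rewrite scaler_sumr; apply: eq_bigr => J _; rewrite ffunE -scalerAl !scalerA mulrC.
Qed.

Fact omulZr c (F G : Om) : omul F (c *: G) = c *: omul F G.
Proof.
apply/ffunP => L; rewrite !ffunE scaler_sumr; apply: eq_bigr => I _.
by rewrite scaler_sumr; apply: eq_bigr => J _; rewrite ffunE -scalerAr !scalerA mulrC.
Qed.

Fact omul_omono I J (a b : MP) :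
  omul (omono I a) (omono J b) =
  if [disjoint I & J] then osgn K I J *: omono (I :|: J) (a * b) else 0.
Proof.
apply/ffunP => L; rewrite ffunE (bigD1 I) //= [X in _ + X]big1 ?addr0; last first.
  move=> I' nI'; rewrite big1 // => J' _.
  by rewrite ffunE (negbTE nI') mul0r scaler0.
rewrite big_mkcond /= (bigD1 J) //= [X in _ + X]big1 ?addr0; last first.
  by move=> J' nJ'; rewrite [omono J b J']ffunE (negbTE nJ') mulr0 scaler0 if_same.
rewrite !ffunE !eqxx; case: [disjoint I & J] => /=; rewrite !ffunE //.
by rewrite eq_sym; case: eqP; rewrite ?scaler0.
Qed.

Fact omul_omonoA I J L (a b c : MP) :
  omul (omul (omono I a) (omono J b)) (omono L c) =
  omul (omono I a) (omul (omono J b) (omono L c)).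
Proof.
rewrite !omul_omono; case dIJ: [disjoint I & J]; case dJL: [disjoint J & L];
  rewrite ?omul0l ?omul0r ?omulZl ?omulZr ?omul_omono ?disjoint_setUl
          ?disjoint_setUr ?dIJ ?dJL /= ?andbF ?scaler0 //.
by case: [disjoint I & L]; rewrite ?scaler0 // !scalerA osgn_cocycle // setUA mulrA.
Qed.

Fact omulA : associative (@omul K n).
Proof.
move=> F G H; rewrite [F]omegaE !omul_suml; apply: eq_bigr => I _.
rewrite [G]omegaE omul_sumr !omul_suml omul_sumr; apply: eq_bigr => J _.
by rewrite [H]omegaE !omul_sumr; apply: eq_bigr => L _; rewrite omul_omonoA.
Qed.

Fact omul1l : left_id (oone K n) (@omul K n).
Proof.
move=> F; rewrite {1}[F]omegaE omul_sumr [RHS]omegaE; apply: eq_bigr => J _.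
rewrite omul_omono -setI_eq0 set0I eqxx osgnE crossings0l cards0 expr0 scale1r.
by rewrite set0U mul1r.
Qed.

Fact omul1r : right_id (oone K n) (@omul K n).
Proof.
move=> F; rewrite {1}[F]omegaE omul_suml [RHS]omegaE; apply: eq_bigr => J _.
rewrite omul_omono -setI_eq0 setI0 eqxx osgnE crossings0r cards0 expr0 scale1r.
by rewrite setU0 mulr1.
Qed.

Fact oone_neq0 : oone K n != 0.
Proof. by apply/eqP => /ffunP/(_ set0); rewrite !ffunE eqxx; apply/eqP; rewrite oner_eq0. Qed.

HB.instance Definition _ := GRing.Lmodule.on Om.
HB.instance Definition _ :=
  GRing.Zmodule_isNzRing.Build Om omulA omul1l omul1r omulDl omulDr oone_neq0.
HB.instance Definition _ :=
  GRing.Lmodule_isLalgebra.Build K Om (fun c F G => esym (omulZl c F G)).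
HB.instance Definition _ :=
  GRing.Lalgebra_isAlgebra.Build K Om (fun c F G => esym (omulZr c F G)).

Lemma omonoM I J (a b : MP) : omono I a * omono J b =
  if [disjoint I & J] then osgn K I J *: omono (I :|: J) (a * b) else 0.
Proof. exact: omul_omono. Qed.

Lemma mul_opoly_omono (p q : MP) (J : {set 'I_n}) : p%:O * omono J q = omono J (p * q).
Proof. by rewrite omonoM -setI_eq0 set0I eqxx osgnE crossings0l cards0 scale1r set0U. Qed.

Lemma mul_omono_opoly (p q : MP) (J : {set 'I_n}) : omono J q * p%:O = omono J (q * p).
Proof. by rewrite omonoM -setI_eq0 setI0 eqxx osgnE crossings0r cards0 scale1r setU0. Qed.

Lemma opolyM (p q : MP) : (p * q)%:O = p%:O * q%:O.
Proof. by rewrite mul_opoly_omono. Qed.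

Lemma commr_opoly (p : MP) (F : Om) : GRing.comm p%:O F.
Proof.
rewrite /GRing.comm [F]omegaE mulr_sumr mulr_suml; apply: eq_bigr => J _.
by rewrite mul_opoly_omono mul_omono_opoly mulrC.
Qed.

Lemma coef_opolyM (p : MP) (F : Om) L : (p%:O * F) L = p * F L.
Proof.
rewrite [F in LHS]omegaE mulr_sumr sum_ffunE (bigD1 L) //= big1 => [|J nJL].
  by rewrite mul_opoly_omono ffunE eqxx addr0.
by rewrite mul_opoly_omono ffunE eq_sym (negbTE nJL).
Qed.

Lemma card_crossings1 (m : 'I_n) (J : {set 'I_n}) :
  #|crossings [set m] J| = #|[set j in J | (j < m)%N]|.
Proof.
have pair_inj : injective (fun j : 'I_n => (m, j)) by move=> j j' [].
rewrite -(card_imset _ pair_inj); apply: eq_card => -[x y]; rewrite !inE /=.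
apply/idP/imsetP => [/and3P[/eqP -> yJ ym]|[j]]; first by exists y; rewrite // inE yJ.
by rewrite inE => /andP[jJ jm] [-> ->]; rewrite eqxx jJ.
Qed.

Lemma osgn_set1 (m m' : 'I_n) : osgn K [set m] [set m'] = (-1) ^+ (m' < m)%N.
Proof.
rewrite osgnE card_crossings1.
rewrite (_ : [set j in _ | _] = if (m' < m)%N then [set m'] else set0).
  by case: ifP; rewrite ?cards1 ?cards0.
apply/setP => j; rewrite !inE.
by case: eqVneq => [->|jm']; case: ifP; rewrite ?inE ?eqxx ?(negbTE jm').
Qed.

Lemma mul_theta_omono m J (p : MP) : theta K m * omono J p =
  if m \in J then 0 else (-1) ^+ #|[set j in J | (j < m)%N]| *: omono (m |: J) p.
Proof. by rewrite omonoM disjoints1 osgnE card_crossings1 mul1r; case: (m \in J). Qed.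

Lemma prod_theta_sorted (l : seq 'I_n) (L : {set 'I_n}) :
  sorted (relpre (@nat_of_ord n) ltn) l ->
  \prod_(j <- l | j \in L) theta K j = omono [set j in L | j \in l] 1.
Proof.
elim: l => [_|x l IHl /= sl].
  by rewrite big_nil; congr omono; apply/setP => j; rewrite !inE andbF.
have x_lt y : y \in l -> (x < y)%N.
  by apply/allP: y; apply: order_path_min sl => ? ? ?; apply: ltn_trans.
have xl : x \notin l by apply/negP => /x_lt; rewrite ltnn.
rewrite big_cons IHl ?(path_sorted sl) //; case: ifP => xL.
  rewrite mul_theta_omono inE (negbTE xl) andbF.
  rewrite (_ : [set j in _ | _] = set0) ?cards0 ?scale1r; last first.
    apply/setP => j; rewrite !inE; apply/negbTE/andP => -[/andP[_ /x_lt xj] jx].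
    by move: (ltn_trans xj jx); rewrite ltnn.
  by congr omono; apply/setP => j; rewrite !inE; case: eqP => // ->; rewrite xL.
by congr omono; apply/setP => j; rewrite !inE; case: eqP => // ->; rewrite xL.
Qed.

Lemma omono_prod L (p : MP) : omono L p = p%:O * \prod_(j in L) theta K j.
Proof.
rewrite big_ord_set prod_theta_sorted ?sorted_enum_ord // mul_opoly_omono mulr1.
by congr omono; apply/setP => j; rewrite inE mem_enum andbT.
Qed.

Lemma omega_rmorph_eq (f g : {rmorphism Om -> Om}) :
  (forall p, f p%:O = g p%:O) -> (forall m, f (theta K m) = g (theta K m)) ->
  f =1 g.
Proof.
move=> fg_poly fg_theta F; rewrite [F]omegaE !rmorph_sum; apply: eq_bigr => L _.
by rewrite omono_prod !rmorphM !rmorph_prod fg_poly; under eq_bigr do rewrite fg_theta.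
Qed.

(** * One-forms and substitution morphisms *)

Definition oform (a : 'I_n -> MP) : Om := \sum_m omono [set m] (a m).

Lemma oformD a b : oform (fun m => a m + b m) = oform a + oform b.
Proof. by rewrite -big_split; apply: eq_bigr => m _; rewrite linearD. Qed.

Lemma oform_sum (I : Type) (r : seq I) (a : I -> 'I_n -> MP) :
  \sum_(i <- r) oform (a i) = oform (fun m => \sum_(i <- r) a i m).
Proof. by rewrite /oform exchange_big; apply: eq_bigr => m _; rewrite linear_sum. Qed.

Lemma oform_single m (p : MP) :
  oform (fun j => if j == m then p else 0) = omono [set m] p.
Proof.
rewrite /oform (bigD1 m) //= eqxx big1 ?addr0 // => j /negbTE ->; exact: linear0.
Qed.

Lemma mul_opoly_oform (p : MP) a : p%:O * oform a = oform (fun m => p * a m).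
Proof. by rewrite mulr_sumr; apply: eq_bigr => m _; rewrite mul_opoly_omono. Qed.

Lemma oform_sqr a : oform a * oform a = 0.
Proof.
rewrite mulr_suml; under eq_bigr do rewrite mulr_sumr.
apply: sumr_antisym => [m|m m']; rewrite !omonoM !disjoints1 !in_set1 ?eqxx //.
case: (eqVneq m m') => [->|mm'] /=; rewrite ?eqxx ?oppr0 //.
rewrite setUC mulrC -scaleNr !osgn_set1; congr (_ *: _).
by case: ltngtP mm' => [_|_|/val_inj ->]; rewrite ?eqxx //= ?opprK.
Qed.

Lemma oform_anticomm a b : oform a * oform b = - (oform b * oform a).
Proof.
apply/eqP; rewrite -addr_eq0; have := oform_sqr (fun m => a m + b m).
by rewrite oformD mulrDl !mulrDr !oform_sqr add0r addr0 => /eqP.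
Qed.

Lemma coef_oformM a (F : Om) L :
  (oform a * F) L = \sum_(m in L) osgn K [set m] (L :\ m) *: (a m * F (L :\ m)).
Proof.
rewrite mulr_suml sum_ffunE [RHS]big_mkcond; apply: eq_bigr => m _.
rewrite [F in LHS]omegaE mulr_sumr sum_ffunE; under eq_bigr do rewrite omonoM disjoints1.
case: ifP => mL.
  rewrite (bigD1 (L :\ m)) //= [X in _ + X]big1 => [|J nJ].
    by rewrite setD1K // !inE eqxx /= !ffunE eqxx addr0.
  case: ifP => [mJ|]; last by rewrite ffunE.
  rewrite !ffunE; case: eqP => [eL|]; rewrite ?scaler0 //.
  by move: nJ; rewrite eL setU1K // eqxx.
apply: big1 => J _; case: ifP => mJ; last by rewrite ffunE.
rewrite !ffunE; case: eqP => [eL|]; rewrite ?scaler0 //.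
by move: mL; rewrite eL setU11.
Qed.

Definition osubst (sigma : MP -> MP) (A : 'I_n -> 'I_n -> MP) (F : Om) : Om :=
  \sum_J (sigma (F J))%:O * \prod_(j in J) oform (A j).

Section Substitution.
Variables (sigma : {rmorphism MP -> MP}) (A : 'I_n -> 'I_n -> MP).
Local Notation eta j := (oform (A j)).

Fact osubst_is_zmod_morphism : zmod_morphism (osubst sigma A).
Proof.
move=> F G; rewrite -sumrB; apply: eq_bigr => J _.
by rewrite !ffunE rmorphB linearB mulrBl.
Qed.

HB.instance Definition _ :=
  GRing.isZmodMorphism.Build Om Om (osubst sigma A) osubst_is_zmod_morphism.

Lemma osubst_omono L p :
  osubst sigma A (omono L p) = (sigma p)%:O * \prod_(j in L) eta j.
Proof.
rewrite /osubst (bigD1 L) //= [X in _ + X]big1 => [|J nJL].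
  by rewrite ffunE eqxx addr0.
by rewrite ffunE (negbTE nJL) rmorph0 linear0 mul0r.
Qed.

Lemma osubst_opolyM p F : osubst sigma A (p%:O * F) = (sigma p)%:O * osubst sigma A F.
Proof.
rewrite [F in LHS]omegaE mulr_sumr !raddf_sum mulr_sumr; apply: eq_bigr => J _.
by rewrite mul_opoly_omono /= !osubst_omono rmorphM opolyM mulrA.
Qed.

Lemma osubst_thetaM m F : osubst sigma A (theta K m * F) = eta m * osubst sigma A F.
Proof.
rewrite [F in LHS]omegaE mulr_sumr !raddf_sum mulr_sumr; apply: eq_bigr => J _.
rewrite /= mul_theta_omono mulrA -(commr_opoly _ (eta m)) -mulrA.
rewrite (mul_prod_set (fun i j => oform_anticomm (A i) (A j)) (fun i => oform_sqr (A i))).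
case: (m \in J); first by rewrite raddf0 mulr0.
by rewrite raddfZsign /= osubst_omono scale_signr !mulrA (commr_sign (sigma (F J))%:O).
Qed.

Lemma osubst_prod_thetaM (r : seq 'I_n) (P : pred 'I_n) F :
  osubst sigma A (\prod_(j <- r | P j) theta K j * F) =
  \prod_(j <- r | P j) eta j * osubst sigma A F.
Proof.
elim: r => [|x r IHr]; first by rewrite !big_nil !mul1r.
by rewrite !big_cons; case: (P x); rewrite // -!mulrA osubst_thetaM IHr.
Qed.

Fact osubst_is_monoid_morphism : monoid_morphism (osubst sigma A).
Proof.
split=> [|F G]; first by rewrite osubst_omono rmorph1 big_set0 mulr1.
rewrite [F in LHS]omegaE mulr_suml raddf_sum mulr_suml; apply: eq_bigr => L _ /=.
by rewrite omono_prod -mulrA osubst_opolyM osubst_prod_thetaM mulrA.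
Qed.

HB.instance Definition _ :=
  GRing.isMonoidMorphism.Build Om Om (osubst sigma A) osubst_is_monoid_morphism.

Lemma osubst_opoly p : osubst sigma A p%:O = (sigma p)%:O.
Proof. by rewrite osubst_omono big_set0 mulr1. Qed.

Lemma osubst_theta m : osubst sigma A (theta K m) = eta m.
Proof. by rewrite osubst_omono rmorph1 mul1r big_set1. Qed.

Lemma osubst_oform a : osubst sigma A (oform a) = \sum_m (sigma (a m))%:O * eta m.
Proof. by rewrite raddf_sum; apply: eq_bigr => m _; rewrite /= osubst_omono big_set1. Qed.

Lemma coef_osubst F L :
  osubst sigma A F L = \sum_J sigma (F J) * (\prod_(j in J) eta j) L.
Proof. by rewrite sum_ffunE; apply: eq_bigr => J _; rewrite coef_opolyM. Qed.

End Substitution.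

End SuperspaceRing.

(** * Products of triangular one-forms *)

Section TriangularForms.
Variables (K : fieldType) (n : nat) (A : 'I_n -> 'I_n -> {mpoly K[n]}).
Hypothesis A_triu : forall i m : 'I_n, (m < i)%N -> A i m = 0.
Local Notation ord_lt := (relpre (@nat_of_ord n) ltn).

Definition weight (L : {set 'I_n}) : nat := \sum_(j in L) j.

Lemma weightD1 (L : {set 'I_n}) m : m \in L -> weight L = (m + weight (L :\ m))%N.
Proof.
move=> mL; rewrite /weight (bigD1 m) //=; congr (_ + _)%N.
by apply: eq_bigl => j; rewrite !inE andbC.
Qed.

Lemma weight_seq (l : seq 'I_n) : uniq l -> weight [set j in l] = (\sum_(j <- l) j)%N.
Proof. by move=> ul; rewrite (big_uniq _ ul); apply: eq_bigl => j; rewrite inE. Qed.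

Lemma coef_prod_oform_seq_neq0 (l : seq 'I_n) (L : {set 'I_n}) :
  sorted ord_lt l -> (\prod_(j <- l) oform (A j)) L != 0 ->
  (\sum_(j <- l) j <= weight L)%N /\
  (weight L = (\sum_(j <- l) j)%N -> L = [set j in l]).
Proof.
elim: l L => [|x l IHl] L /= sl.
  rewrite big_nil ffunE; case: (eqVneq L set0) => [-> _|_]; last by rewrite eqxx.
  by rewrite big_nil; split=> // _; apply/setP => j; rewrite !inE.
rewrite big_cons coef_oformM => /sumr_neq0_exists[m mL].
rewrite scaler_eq0 mulf_eq0 !negb_or => /and3P[_ nzA nzP].
have xm : (x <= m)%N by rewrite leqNgt; apply: contraNN nzA => /A_triu ->.
have [le_lw eq_lw] := IHl _ (path_sorted sl) nzP.
rewrite big_cons (weightD1 mL); split=> [|eq_w]; first exact: leq_add.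
have mx : m = x by apply: val_inj => /=; lia.
rewrite -(setD1K mL) {}eq_lw; last by lia.
by apply/setP => j; rewrite !inE mx.
Qed.

Lemma coef_prod_oform_seq_diag (l : seq 'I_n) :
  sorted ord_lt l -> (\prod_(j <- l) oform (A j)) [set j in l] = \prod_(j <- l) A j j.
Proof.
elim: l => [|x l IHl] /= sl.
  by rewrite !big_nil ffunE (_ : [set j in [::]] = set0) ?eqxx.
have x_lt y : y \in l -> (x < y)%N.
  by apply/allP: y; apply: order_path_min sl => ? ? ?; apply: ltn_trans.
have xl : x \notin l by apply/negP => /x_lt; rewrite ltnn.
have {}sl := path_sorted sl; have ul : uniq l.
  by apply: sorted_uniq sl => [? ? ?|i]; [apply: ltn_trans | rewrite /= ltnn].
rewrite !big_cons coef_oformM; set S := [set j in x :: l].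
have Sx : S :\ x = [set j in l].
  by apply/setP => j; rewrite !inE; case: eqVneq => // ->; rewrite (negbTE xl).
rewrite (bigD1 x) ?[S :\ x]Sx ?IHl //= ?osgnE ?card_crossings1; last by rewrite inE mem_head.
rewrite (_ : [set j in _ | _] = set0) ?cards0 ?scale1r; last first.
  apply/setP => j; rewrite !inE; apply/negbTE/andP => -[/x_lt xj jx].
  by move: (ltn_trans xj jx); rewrite ltnn.
rewrite [X in _ + X]big1 ?addr0 // => m /andP[mS mx].
have xm : (x < m)%N by apply: x_lt; move: mS; rewrite !inE (negbTE mx).
have [->|/(coef_prod_oform_seq_neq0 sl)[le _]] :=
  eqVneq ((\prod_(j <- l) oform (A j)) (S :\ m)) 0; first by rewrite mulr0 scaler0.
have wS : (x + \sum_(j <- l) j)%N = (m + weight (S :\ m))%N.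
  by rewrite -weightD1 // /S weight_seq /= ?xl // big_cons.
by move: le; rewrite -(leq_add2l m) -wS leq_add2r leqNgt xm.
Qed.

Local Notation enum_set I := [seq j <- enum 'I_n | j \in I].

Let sorted_enum_set (I : {set 'I_n}) : sorted ord_lt (enum_set I).
Proof. by apply: sorted_filter (sorted_enum_ord n) => ? ? ?; apply: ltn_trans. Qed.

Let set_enum_set (I : {set 'I_n}) : [set j in enum_set I] = I.
Proof. by apply/setP => j; rewrite !inE mem_filter mem_enum andbT. Qed.

Let weight_enum_set (I : {set 'I_n}) : weight I = (\sum_(j <- enum_set I) j)%N.
Proof. by rewrite /weight big_ord_set big_filter. Qed.

Lemma coef_prod_oform_neq0 (I L : {set 'I_n}) :
  (\prod_(j in I) oform (A j)) L != 0 -> L != I -> (weight I < weight L)%N.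
Proof.
rewrite big_ord_set -big_filter => /(coef_prod_oform_seq_neq0 (sorted_enum_set I))[].
rewrite -weight_enum_set set_enum_set ltn_neqAle => -> eqL nLI; rewrite andbT.
by apply: contra nLI => /eqP/esym/eqL ->.
Qed.

Lemma coef_prod_oform_diag (J : {set 'I_n}) :
  (\prod_(j in J) oform (A j)) J = \prod_(j in J) A j j.
Proof.
have := coef_prod_oform_seq_diag (sorted_enum_set J).
by rewrite set_enum_set !big_filter -!big_ord_set.
Qed.

End TriangularForms.

Section CoefficientIdeals.
Variables (K : fieldType) (n : nat).
Local Notation MP := {mpoly K[n]}.
Local Notation Om := (Omega K n).

Definition poly_ideal (S : MP -> Prop) :=
  [/\ S 0, forall p q, S p -> S q -> S (p + q) & forall p q, S q -> S (p * q)].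

Definition coef_in (S : MP -> Prop) (F : Om) := forall L, S (F L).

Lemma IB_ideal : poly_ideal (@IB K n).
Proof.
split; first by exists [::]; rewrite big_nil.
- move=> p q [s [hs ->]] [t [ht ->]]; exists (s ++ t); rewrite big_cat; split=> // u.
  by rewrite mem_cat => /orP[/hs|/ht].
move=> p q [s [hs ->]]; exists [seq (p * u.1, u.2) | u <- s]; split.
  by move=> u /mapP[v /hs ? ->].
by rewrite big_map mulr_sumr; apply: eq_bigr => u _; rewrite mulrA.
Qed.

Lemma IB_invariant (p : MP) : poly_invariant p -> p@_0%MM = 0 -> IB p.
Proof.
move=> p_inv p0; exists [:: (1, p)]; rewrite big_seq1 mul1r.
by split=> // u /[!inE] /eqP ->.
Qed.

Lemma mcoeff0_ideal : poly_ideal (fun p : MP => p@_0%MM = 0).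
Proof.
split=> [|p q p0 q0|p q q0]; rewrite ?mcoeff0 ?mcoeffD ?p0 ?q0 ?addr0 //.
by rewrite (rmorphM (mcoeff 0%MM)) /= q0 mulr0.
Qed.

Variables (S : MP -> Prop) (S_ideal : poly_ideal S).

Lemma ideal_sum I (r : seq I) (P : pred I) (f : I -> MP) :
  (forall i, P i -> S (f i)) -> S (\sum_(i <- r | P i) f i).
Proof. by case: S_ideal => S0 SD _ Sf; apply: big_ind. Qed.

Lemma ideal_scale c p : S p -> S (c *: p).
Proof. by case: S_ideal => _ _ SM; rewrite -mul_mpolyC; apply: SM. Qed.

Lemma coef_in_sum (I : eqType) (r : seq I) (F : I -> Om) :
  (forall i, i \in r -> coef_in S (F i)) -> coef_in S (\sum_(i <- r) F i).
Proof. by move=> SF L; rewrite sum_ffunE big_seq; apply: ideal_sum => i /SF. Qed.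

Lemma coef_inMl F G : coef_in S G -> coef_in S (F * G).
Proof.
case: S_ideal => _ _ SM SG L; rewrite ffunE.
by apply: ideal_sum => I _; apply: ideal_sum => J _; apply/ideal_scale/SM.
Qed.

Lemma coef_inMr F G : coef_in S F -> coef_in S (F * G).
Proof.
case: S_ideal => _ _ SM SF L; rewrite ffunE.
by apply: ideal_sum => I _; apply: ideal_sum => J _; rewrite mulrC; apply/ideal_scale/SM.
Qed.

Lemma coef_in_oform a : (forall m, S (a m)) -> coef_in S (oform a).
Proof.
move=> Sa; apply: coef_in_sum => m _ L; rewrite ffunE.
by case: S_ideal => S0 _ _; case: eqP.
Qed.

Lemma coef_in_osubst A F : coef_in S F -> coef_in S (osubst idfun A F).
Proof.
case: S_ideal => _ _ SM SF L; rewrite coef_osubst.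
by apply: ideal_sum => J _; rewrite mulrC; apply/SM/SF.
Qed.

End CoefficientIdeals.

Lemma triangular_independence (K : fieldType) n
    (D : {set 'I_n} -> {set 'I_n} -> {mpoly K[n]})
    (B : {set 'I_n} -> {mpoly K[n]} -> Prop) :
  (forall I L, D I L != 0 -> L != I -> (weight I < weight L)%N) ->
  (forall J, quot_basis (colon (@IB K n) (D J J)) (B J)) ->
  forall (s : seq ({set 'I_n} * {mpoly K[n]})) (c : {set 'I_n} * {mpoly K[n]} -> K),
    uniq s -> (forall t, t \in s -> B t.1 t.2) ->
    (forall L, IB (\sum_(t <- s) c t *: (t.2 * D t.1 L))) ->
    forall t, t \in s -> c t = 0.
Proof.
move=> D_triu D_basis s c s_uniq sB sI t0.
have [N] := ubnP (weight t0.1); elim: N t0 => // N IHN [J p0] /= wJ p0s.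
have rowJ : IB ((\sum_(t <- s | t.1 == J) c t *: t.2) * D J J).
  have := sI J; rewrite (bigID (fun t => t.1 == J)) /= [X in _ + X]big_seq_cond.
  rewrite [X in _ + X]big1 ?addr0 => [|[I p] /andP[ts /= nIJ]]; last first.
    have [->|/D_triu] := eqVneq (D I J) 0; first by rewrite mulr0 scaler0.
    rewrite eq_sym nIJ => /(_ isT) wI.
    by rewrite (IHN (I, p)) ?scale0r //= (leq_trans wI).
  by rewrite mulr_suml; congr IB; apply: eq_bigr => t /eqP ->; rewrite scalerAl.
have [indep _] := D_basis J.
apply: (indep [seq t.2 | t <- s & t.1 == J] (fun p => c (J, p))).
- rewrite map_inj_in_uniq ?filter_uniq // => -[I p] [I' p'].
  by rewrite !mem_filter /= => /andP[/eqP -> _] /andP[/eqP -> _] ->.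
- by move=> p /mapP[[I p']]; rewrite mem_filter /= => /andP[/eqP -> /sB ?] ->.
- rewrite /colon big_map big_filter mulrC; congr IB: rowJ; congr (_ * _).
  by apply: eq_bigr => -[I p] /= /eqP ->.
- by apply/mapP; exists (J, p0); rewrite // mem_filter eqxx.
Qed.

(** * The substitutions Xodd and Qsubst *)

Section HyperoctahedralSubstitutions.
Variables (K : fieldType) (n : nat).
Local Notation MP := {mpoly K[n]}.
Local Notation Om := (Omega K n).

Definition odd_powers (i a : 'I_n) : MP := 'X_i ^+ (2 * a).+1.
Local Notation Xodd := (osubst idfun odd_powers).
Local Notation delta_mat := (fun j m : 'I_n => if m == j then 1 else 0 : MP).

Definition sperm_mat (pi : signed_perm n) (j m : 'I_n) : MP :=
  if m == pi.1 j then sgn_of K (pi.2 j) *: 1 else 0.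

Lemma coef_osubst_delta (sigma : {rmorphism MP -> MP}) F L :
  osubst sigma delta_mat F L = sigma (F L).
Proof.
have prod_delta (J : {set 'I_n}) : \prod_(j in J) oform (delta_mat j) = omono J 1.
  by under eq_bigr do rewrite oform_single; rewrite [RHS]omono_prod mul1r.
rewrite coef_osubst (bigD1 L) //= [X in _ + X]big1 => [|J nJL]; rewrite prod_delta ffunE.
  by rewrite eqxx mulr1 addr0.
by rewrite eq_sym (negbTE nJL) mulr0.
Qed.

Lemma oactE pi F : oact pi F = osubst (comp_mpoly (spx K pi)) (sperm_mat pi) F.
Proof.
apply: eq_bigr => J _; congr (_ * _); rewrite foldrE big_map.
transitivity (\prod_(j <- enum J) (sgn_of K (pi.2 j) *: theta K (pi.1 j))); first by [].
rewrite [RHS]big_ord_set -[RHS]big_filter.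
rewrite (_ : enum J = [seq j <- enum 'I_n | j \in J]) ?enumT //.
by apply: eq_bigr => j _; rewrite /sperm_mat oform_single linearZ.
Qed.

Lemma spx_X pi (i : 'I_n) : 'X_i \mPo spx K pi = sgn_of K (pi.2 i) *: 'X_(pi.1 i).
Proof. by rewrite comp_mpolyXU -tnth_nth tnth_mktuple. Qed.

Lemma sgn_of_odd b k : sgn_of K b ^+ (2 * k).+1 = sgn_of K b.
Proof. by rewrite /sgn_of exprS exprM sqrr_sign expr1n mulr1. Qed.

Lemma Xodd_oact pi F :
  Xodd (oact pi F) = osubst (comp_mpoly (spx K pi)) delta_mat (Xodd F).
Proof.
rewrite oactE; apply: (@omega_rmorph_eq _ _ (Xodd \o osubst _ (sperm_mat pi))
  (osubst _ delta_mat \o Xodd)) => [p|m] /=; first by rewrite !osubst_opoly.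
rewrite !osubst_theta /sperm_mat oform_single osubst_omono big_set1.
rewrite mul_opoly_oform osubst_oform.
under eq_bigr do rewrite oform_single mul_opoly_omono mulr1.
apply: eq_bigr => a _ /=; congr omono.
by rewrite mulr_algl /odd_powers rmorphXn /= spx_X exprZn sgn_of_odd.
Qed.

Lemma coef_Xodd_IB h :
  omega_invariant h -> (h set0)@_0%MM = 0 -> coef_in (@IB K n) (Xodd h).
Proof.
move=> h_inv h0 L; apply: IB_invariant => [pi|].
  have := congr1 (fun F : Om => F L) (Xodd_oact pi h).
  by rewrite h_inv /= coef_osubst_delta => XhL; rewrite [RHS]XhL.
rewrite coef_osubst; apply: (ideal_sum (mcoeff0_ideal K n)) => J _ /=.
rewrite (rmorphM (mcoeff 0%MM)) /=.
have [->|[m mJ]] := set_0Vmem J; first by rewrite big_set0 h0 mul0r.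
rewrite big_ord_set -big_filter.
have : m \in [seq j <- enum 'I_n | j \in J] by rewrite mem_filter mJ mem_enum.
case: [seq j <- _ | _] => // x l _; rewrite big_cons (coef_inMr (mcoeff0_ideal K n)) ?mulr0 //.
apply: (coef_in_oform (mcoeff0_ideal K n)) => a.
by rewrite /odd_powers (rmorphXn (mcoeff 0%MM)) /= mcoeffX mnm1_eq0 expr0n.
Qed.

Definition Qpoly (m : 'I_n) : {poly MP} :=
  \prod_(i : 'I_n | (m < i)%N) ('X - ('X_i ^+ 2)%:P).
Definition Qcoef (a m : 'I_n) : MP := (Qpoly m)`_a.
Definition Acoef (i m : 'I_n) : MP :=
  'X_i * \prod_(i' : 'I_n | (m < i')%N) ('X_i ^+ 2 - 'X_i' ^+ 2).
Local Notation Qsubst := (osubst idfun Qcoef).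

Lemma size_Qpoly (m : 'I_n) : (size (Qpoly m) <= n)%N.
Proof.
rewrite /Qpoly -big_filter size_prod_XsubC size_filter [index_enum _]unlock -enumT.
rewrite -[X in (_ < X)%N](size_enum_ord n) -(count_predC (fun i : 'I_n => (m < i)%N)).
rewrite -addn1 leq_add2l -has_count; apply/hasP.
by exists m; rewrite ?mem_enum //= ltnn.
Qed.

Lemma sum_odd_powers_Qcoef (i m : 'I_n) : \sum_a odd_powers i a * Qcoef a m = Acoef i m.
Proof.
have QX2 : (Qpoly m).['X_i ^+ 2] = \prod_(i' : 'I_n | (m < i')%N) ('X_i ^+ 2 - 'X_i' ^+ 2).
  by rewrite horner_prod; apply: eq_bigr => i' _; rewrite hornerXsubC.
rewrite /Acoef -QX2 (horner_coef_wide _ (size_Qpoly m)) mulr_sumr.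
by apply: eq_bigr => a _; rewrite /odd_powers /Qcoef exprS -exprM -mulrA [X in _ * X]mulrC.
Qed.

Lemma Acoef_triu (i m : 'I_n) : (m < i)%N -> Acoef i m = 0.
Proof. by move=> mi; rewrite /Acoef (bigD1 i) //= subrr mul0r mulr0. Qed.

Lemma fJ_Acoef J : fJ K J = \prod_(j in J) Acoef j j.
Proof. by []. Qed.

Lemma Qsubst_Xodd_theta i : Qsubst (Xodd (theta K i)) = oform (Acoef i).
Proof.
rewrite osubst_theta osubst_oform; under eq_bigr do rewrite mul_opoly_oform.
by rewrite oform_sum /oform; apply: eq_bigr => m _; rewrite sum_odd_powers_Qcoef.
Qed.

Lemma Qsubst_Xodd_omono J p :
  Qsubst (Xodd (omono J p)) = p%:O * \prod_(j in J) oform (Acoef j).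
Proof.
rewrite omono_prod !rmorphM !rmorph_prod /= !osubst_opoly.
by congr (_ * _); apply: eq_bigr => j _; apply: Qsubst_Xodd_theta.
Qed.

Lemma coef_Qsubst_Xodd_SIB F : SIB F -> coef_in (@IB K n) ((Qsubst \o Xodd) F).
Proof.
move=> [s [hs ->]]; rewrite rmorph_sum; apply: (coef_in_sum (IB_ideal K n)) => t ts.
rewrite !rmorphM; apply/(coef_inMr (IB_ideal K n))/(coef_inMl (IB_ideal K n)).
by have [t_inv t0] := hs t ts; apply/(coef_in_osubst (IB_ideal K n))/coef_Xodd_IB.
Qed.

Theorem superspace_basis_independent (B : {set 'I_n} -> MP -> Prop) :
  (forall J, quot_basis (colon (@IB K n) (fJ K J)) (B J)) ->
  forall (s : seq ({set 'I_n} * MP)) (c : {set 'I_n} * MP -> K),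
    uniq s -> (forall t, t \in s -> B t.1 t.2) ->
    SIB (\sum_(t <- s) c t *: omono t.1 t.2) ->
    forall t, t \in s -> c t = 0.
Proof.
move=> fJ_basis s c s_uniq sB /coef_Qsubst_Xodd_SIB PhiI.
apply: (triangular_independence (D := fun I L => (\prod_(j in I) oform (Acoef j)) L)
  _ _ s_uniq sB) => [I L|J|L].
- exact: coef_prod_oform_neq0 Acoef_triu I L.
- by rewrite (coef_prod_oform_diag Acoef_triu) -fJ_Acoef.
have := PhiI L; rewrite rmorph_sum sum_ffunE; congr IB; apply: eq_bigr => t _.
by rewrite -linearZ /= Qsubst_Xodd_omono coef_opolyM scalerAl.
Qed.

End HyperoctahedralSubstitutions.

Theorem mainTheorem11 (R : realType) (n : nat)
  (B : {set 'I_n} -> {mpoly R[i][n]} -> Prop) :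
  (forall (J : {set 'I_n}) (p : {mpoly R[i][n]}),
      B J p -> exists d : nat, p \is d.-homog) ->
  (forall J : {set 'I_n}, quot_basis (colon (@IB R[i] n) (fJ R[i] J)) (B J)) ->
  forall (s : seq ({set 'I_n} * {mpoly R[i][n]}))
         (c : {set 'I_n} * {mpoly R[i][n]} -> R[i]),
    uniq s -> (forall t, t \in s -> B t.1 t.2) ->
    SIB (\sum_(t <- s) c t *: omono t.1 t.2) ->
    forall t, t \in s -> c t = 0.
Proof. by move=> _; apply: superspace_basis_independent. Qed.
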